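(* With $\Delta=\{D_1,\dots,D_6\}$ and $\sigma_1=D_1+D_2-D_3$, $\sigma_2=-D_1+D_2+D_3-D_4-D_6$, $\sigma_3=-D_2+D_3+D_4-D_5$, $\sigma_4=-D_3+D_4+D_5$, $\sigma_5=-D_5+D_6$ in $\mathbb Z\Delta$, let $(D,E,F)$ be a low fundamental triple, put $\gamma=D+E-F$, and suppose $\sigma_5\in\mathrm{supp}_\Sigma\gamma$. Then, up to exchanging $D$ and $E$, $(D,E,F)$ is one of: $(D_2,D_3,D_1+D_4+D_5)$ with $\gamma=\sigma_2+\sigma_5$; $(D_3,D_3,D_1+2D_5)$ with $\gamma=\sigma_2+\sigma_3+\sigma_5$; $(D_2,D_2,D_4+D_5)$ with $\gamma=\sigma_1+\sigma_2+\sigma_5$; $(D_2,D_3,2D_5)$ with $\gamma=\sigma_1+\sigma_2+\sigma_3+\sigma_5$; $(D_3,D_4,D_1+D_5)$ with $\gamma=\sigma_2+\sigma_3+\sigma_4+\sigma_5$; $(D_4,D_4,D_1)$ with $\gamma=\sigma_2+\sigma_3+2\sigma_4+\sigma_5$.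
   Context: $\Sigma=\{\sigma_1,\dots,\sigma_5\}$. For $D,E\in\mathbb Z\Delta$ write $D\le_\Sigma E$ if $E-D\in\mathbb N\Sigma$. A triple $(D,E,F)\in(\mathbb N\Delta)^3$ with $F\le_\Sigma D+E$ is low if for all $D',E'\in\mathbb N\Delta$ with $D'\le_\Sigma D$, $E'\le_\Sigma E$ and $F\le_\Sigma D'+E'$ one has $D'=D$ and $E'=E$; it is fundamental if $D,E\in\Delta$. For $\gamma=\sum a_i\sigma_i\in\mathbb N\Sigma$, $\mathrm{supp}_\Sigma\gamma=\{\sigma_i:a_i>0\}$. *)

(* Z-lattice ZΔ with basis Δ = {D_1,...,D_6} is modelled as
   finite functions 'I_6 -> int (coordinate i-1 = coefficient of D_i). *)
From HB Require Import structures.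
From mathcomp Require Import all_boot all_order all_algebra.
Set Implicit Arguments. Unset Strict Implicit. Unset Printing Implicit Defensive.
Import Order.TTheory GRing.Theory Num.Theory.
Local Open Scope ring_scope.

Definition ZD := {ffun 'I_6 -> int}.

Definition Dv (i : 'I_6) : ZD := [ffun j => (i == j)%:R].

Definition D1 : ZD := Dv (@Ordinal 6 0 isT).
Definition D2 : ZD := Dv (@Ordinal 6 1 isT).
Definition D3 : ZD := Dv (@Ordinal 6 2 isT).
Definition D4 : ZD := Dv (@Ordinal 6 3 isT).
Definition D5 : ZD := Dv (@Ordinal 6 4 isT).
Definition D6 : ZD := Dv (@Ordinal 6 5 isT).

Definition sig1 : ZD := D1 + D2 - D3.
Definition sig2 : ZD := - D1 + D2 + D3 - D4 - D6.
Definition sig3 : ZD := - D2 + D3 + D4 - D5.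
Definition sig4 : ZD := - D3 + D4 + D5.
Definition sig5 : ZD := - D5 + D6.

Definition sigma (i : 'I_5) : ZD :=
  match val i with
  | 0 => sig1 | 1 => sig2 | 2 => sig3 | 3 => sig4 | _ => sig5
  end.

Definition NScoef (a : 'I_5 -> nat) (x : ZD) : Prop :=
  x = \sum_(i < 5) sigma i *+ a i.

Definition inNS (x : ZD) : Prop := exists a : 'I_5 -> nat, NScoef a x.

Definition leS (D E : ZD) : Prop := inNS (E - D).

Definition inND (x : ZD) : Prop := forall i, 0 <= x i.

Definition inDelta (x : ZD) : Prop := exists i, x = Dv i.

Definition low_triple (D E F : ZD) : Prop :=
  [/\ inND D, inND E, inND F, leS F (D + E) &
   forall D' E' : ZD, inND D' -> inND E' -> leS D' D -> leS E' E ->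
     leS F (D' + E') -> D' = D /\ E' = E].

Definition fundamental (D E F : ZD) : Prop := inDelta D /\ inDelta E.

(* σ_5 ∈ supp_Σ γ (γ ∈ NΣ with positive σ_5-coefficient; the σ_i are
   linearly independent so the coefficients are unique). *)
Definition sig5_in_supp (g : ZD) : Prop :=
  exists a : 'I_5 -> nat, NScoef a g /\ (0 < a (@Ordinal 5 4 isT))%N.

Definition triple_is (D E F X Y Z : ZD) : Prop :=
  ((D = X /\ E = Y) \/ (D = Y /\ E = X)) /\ F = Z.

From HB Require Import structures.
From mathcomp Require Import all_boot all_order all_algebra zify.
Import Order.TTheory GRing.Theory Num.Theory.
Set Implicit Arguments.
Unset Strict Implicit.
Unset Printing Implicit Defensive.
Local Open Scope ring_scope.

(* Write D = D_i, E = D_j and gamma = sum_k a_k sigma_k.  Lowness forbids lowering D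
   (or E) by a Sigma-combination dominated by gamma.  Since D_6 - D_5 = sigma_5 and
   D_2 - D_1 = sigma_2 + sigma_4 + sigma_5, neither D nor E is D_6, and D_2 can only
   occur when a_2 a_4 = 0.  What remains is the linear system F = D + E - gamma >= 0 in the six
   coordinates; for i <= j its solutions with a_5 > 0 are exactly the six listed ones. *)

Lemma sum_sigmaE (a : 'I_5 -> nat) : \sum_(k < 5) sigma k *+ a k =
  sig1 *+ a (@Ordinal 5 0 isT) + sig2 *+ a (@Ordinal 5 1 isT) + sig3 *+ a (@Ordinal 5 2 isT)
  + sig4 *+ a (@Ordinal 5 3 isT) + sig5 *+ a (@Ordinal 5 4 isT).
Proof.
rewrite !big_ord_recr big_ord0 /= add0r.
by do ! congr (_ + _); congr (_ *+ a _); apply/val_inj.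
Qed.

Definition sigma_coords (c0 c1 c2 c3 c4 : int) : seq int :=
  [:: c0 - c1; c0 + c1 - c2; - c0 + c1 + c2 - c3; - c1 + c2 + c3; - c2 + c3 - c4;
      - c1 + c4].

Lemma NScoef_coords a x (k : 'I_6) : NScoef a x ->
  x k = (sigma_coords (a (@Ordinal 5 0 isT)) (a (@Ordinal 5 1 isT))
          (a (@Ordinal 5 2 isT)) (a (@Ordinal 5 3 isT)) (a (@Ordinal 5 4 isT)))`_k.
Proof.
rewrite /NScoef sum_sigmaE => ->.
by case: k => [[|[|[|[|[|[|//]]]]]] ?];
  rewrite /sig1 /sig2 /sig3 /sig4 /sig5 /D1 /D2 /D3 /D4 /D5 /D6 /Dv !(ffunE, ffunMnE) /=; lia.
Qed.

Ltac zd_coordwise := rewrite ?sum_sigmaE; apply/ffunP => -[[|[|[|[|[|[|//]]]]]] ?];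
  by rewrite /sig1 /sig2 /sig3 /sig4 /sig5 /D1 /D2 /D3 /D4 /D5 /D6 /Dv !ffunE.

Lemma NScoef0 : NScoef (fun _ => 0%N) 0.
Proof. by rewrite /NScoef big1. Qed.

Lemma NScoefB a b x y : NScoef a x -> NScoef b y -> (forall k, b k <= a k)%N ->
  NScoef (fun k => a k - b k)%N (x - y).
Proof.
by rewrite /NScoef => -> -> le_ba; rewrite -sumrB; apply: eq_bigr => k _; rewrite mulrnBr.
Qed.

Lemma low_tripleC D E F : low_triple D E F -> low_triple E D F.
Proof.
case=> nD nE nF leF low; split=> //; first by rewrite addrC.
by move=> E' D' nE' nD' leE leD; rewrite addrC => /(low _ _ nD' nE' leD leE) [-> ->].
Qed.

Lemma low_triple_minimal D E F D' a b :
  low_triple D E F -> NScoef a (D + E - F) -> inND D' -> NScoef b (D - D') ->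
  (forall k, b k <= a k)%N -> D' = D.
Proof.
case=> _ nE _ _ low Ha nD' Hb le_ba.
have [] // := low D' E nD' nE; first by exists b.
  by exists (fun _ => 0%N); rewrite subrr; exact: NScoef0.
exists (fun k => a k - b k)%N.
have -> : D' + E - F = D + E - F - (D - D') by rewrite opprB [RHS]addrC !addrA subrK.
exact: NScoefB.
Qed.

Lemma low_sig5_neq_D6 D E F a : low_triple D E F -> NScoef a (D + E - F) ->
  (0 < a (@Ordinal 5 4 isT))%N -> D <> D6.
Proof.
move=> low Ha a4 eD.
have : D5 = D.
  apply: (low_triple_minimal (b := fun k => (val k == 4)%N : nat) low Ha).
  - by move=> k; rewrite ffunE; case: (_ == _).
  - by rewrite /NScoef eD; zd_coordwise.
  by case=> [[|[|[|[|[|//]]]]] h] //=; rewrite (bool_irrelevance h isT).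
by rewrite eD => /ffunP/(_ (@Ordinal 6 4 isT)); rewrite !ffunE.
Qed.

Lemma low_sig5_neq_D2 D E F a : low_triple D E F -> NScoef a (D + E - F) ->
  (0 < a (@Ordinal 5 1 isT))%N -> (0 < a (@Ordinal 5 3 isT))%N ->
  (0 < a (@Ordinal 5 4 isT))%N -> D <> D2.
Proof.
move=> low Ha a1 a3 a4 eD.
have : D1 = D.
  apply: (low_triple_minimal (b := fun k => (val k \in [:: 1; 3; 4])%N : nat) low Ha).
  - by move=> k; rewrite ffunE; case: (_ == _).
  - by rewrite /NScoef eD; zd_coordwise.
  by case=> [[|[|[|[|[|//]]]]] h] //=; rewrite (bool_irrelevance h isT).
by rewrite eD => /ffunP/(_ (@Ordinal 6 0 isT)); rewrite !ffunE.
Qed.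

Ltac pick_disjunct :=
  first [left; solve [repeat split; lia] | right; pick_disjunct | solve [repeat split; lia]].

(* For (i, j) = (1, 2) both c0 = 0 and c0 = 1 are solutions, hence the split on c0. *)
Lemma low_sig5_coef_cases (i j c0 c1 c2 c3 c4 : nat) :
  (i <= j < 5)%N -> (0 < c4)%N -> ((0 < c1)%N -> (0 < c3)%N -> i <> 1%N /\ j <> 1%N) ->
  (forall k, 0 <= (i == k)%:R + (j == k)%:R - (sigma_coords c0 c1 c2 c3 c4)`_k) ->
  [/\ i = 1, j = 2 & [/\ c0 = 0, c1 = 1, c2 = 0, c3 = 0 & c4 = 1]]%N \/
  [/\ i = 2, j = 2 & [/\ c0 = 0, c1 = 1, c2 = 1, c3 = 0 & c4 = 1]]%N \/
  [/\ i = 1, j = 1 & [/\ c0 = 1, c1 = 1, c2 = 0, c3 = 0 & c4 = 1]]%N \/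
  [/\ i = 1, j = 2 & [/\ c0 = 1, c1 = 1, c2 = 1, c3 = 0 & c4 = 1]]%N \/
  [/\ i = 2, j = 3 & [/\ c0 = 0, c1 = 1, c2 = 1, c3 = 1 & c4 = 1]]%N \/
  [/\ i = 3, j = 3 & [/\ c0 = 0, c1 = 1, c2 = 1, c3 = 2 & c4 = 1]]%N.
Proof.
move=> /andP[le_ij lt_j5] c4_gt0 no_D2 F_ge0.
move: (F_ge0 0%N) (F_ge0 1%N) (F_ge0 2%N) (F_ge0 3%N) (F_ge0 4%N) (F_ge0 5%N).
move: le_ij lt_j5 no_D2 {F_ge0}.
case: j => [|[|[|[|[|j]]]]] //; case: i => [|[|[|[|[|i]]]]] //= _ _ no_D2 F0 F1 F2 F3 F4 F5.
all: have [c0_eq0|c0_gt0] := leqP c0 0.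
all: first [exfalso; lia | pick_disjunct].
Qed.

Lemma fundamental_coords_ge0 (i j : 'I_6) F a :
  NScoef a (Dv i + Dv j - F) -> inND F ->
  forall k, 0 <= (i == k :> nat)%:R + (j == k :> nat)%:R -
    (sigma_coords (a (@Ordinal 5 0 isT)) (a (@Ordinal 5 1 isT))
       (a (@Ordinal 5 2 isT)) (a (@Ordinal 5 3 isT)) (a (@Ordinal 5 4 isT)))`_k.
Proof.
move=> Ha F_ge0 k; have [lt_k6|ge_k6] := ltnP k 6; last by rewrite nth_default //; lia.
have := NScoef_coords (Ordinal lt_k6) Ha; rewrite !ffunE /= => <-.
by rewrite opprB addrC subrK; apply: F_ge0.
Qed.

Lemma triple_is_intro D E F X Y Z g : D = X -> E = Y -> D + E - F = g -> X + Y - g = Z ->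
  triple_is D E F X Y Z /\ D + E - F = g.
Proof. by move=> -> -> <- <-; rewrite opprB addrC subrK; do 2 split=> //; left. Qed.

Theorem lemma2p8 (D E F : ZD) :
  low_triple D E F -> fundamental D E F ->
  sig5_in_supp (D + E - F) ->
  (triple_is D E F D2 D3 (D1 + D4 + D5) /\ D + E - F = sig2 + sig5) \/
      (triple_is D E F D3 D3 (D1 + D5 *+ 2) /\ D + E - F = sig2 + sig3 + sig5) \/
      (triple_is D E F D2 D2 (D4 + D5) /\ D + E - F = sig1 + sig2 + sig5) \/
      (triple_is D E F D2 D3 (D5 *+ 2) /\ D + E - F = sig1 + sig2 + sig3 + sig5) \/
      (triple_is D E F D3 D4 (D1 + D5) /\ D + E - F = sig2 + sig3 + sig4 + sig5) \/
    (triple_is D E F D4 D4 D1 /\ D + E - F = sig2 + sig3 + sig4 *+ 2 + sig5).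
Proof.
move=> low [[i eD] [j eE]] [a [Ha a4_gt0]]; subst D E.
have HaC : NScoef a (Dv j + Dv i - F) by rewrite /NScoef (addrC (Dv j)).
wlog le_ij : i j low Ha HaC / (i <= j)%N.
  move=> main; have [|/ltnW le_ji] := leqP i j; first exact: main.
  have := main j i (low_tripleC low) HaC Ha le_ji.
  by rewrite /triple_is (addrC (Dv j)); tauto.
have j_lt5 : (j < 5)%N.
  rewrite ltn_neqAle -ltnS ltn_ord andbT; apply/eqP => j5.
  by apply: (low_sig5_neq_D6 (low_tripleC low) HaC a4_gt0); congr Dv; apply: val_inj.
have no_D2 : (0 < a (@Ordinal 5 1 isT))%N -> (0 < a (@Ordinal 5 3 isT))%N ->
    val i <> 1%N /\ val j <> 1%N.
  move=> a1 a3; split=> [i1|j1].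
    by apply: (low_sig5_neq_D2 low Ha a1 a3 a4_gt0); congr Dv; apply: val_inj.
  by apply: (low_sig5_neq_D2 (low_tripleC low) HaC a1 a3 a4_gt0); congr Dv; apply: val_inj.
have [_ _ F_ge0 _ _] := low.
have ij : (i <= j < 5)%N by rewrite le_ij.
have cases := low_sig5_coef_cases ij a4_gt0 no_D2 (fundamental_coords_ge0 Ha F_ge0).
move: Ha; rewrite /NScoef sum_sigmaE.
case: cases => [|[|[|[|[|]]]]] [i_val j_val [-> -> -> -> ->]] Ha;
  [left | right; left | do 2 right; left | do 3 right; left | do 4 right; left | do 5 right];
  (apply: triple_is_intro; [congr Dv; exact: val_inj | congr Dv; exact: val_inj
     | by rewrite Ha !(mulr0n, mulr1n, addr0, add0r) | zd_coordwise]).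
Qed.
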